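(* Let $N\ge2$, $V_{th}>0$, and consider a multi-layer feedback spiking neural network with discrete integrate-and-fire neurons organized in layers $l=1,\dots,N$, with weight matrices $\mathbf{F}^1$ (input to layer 1), $\mathbf{F}^{l}$ (layer $l-1$ to layer $l$, $l=2,\dots,N$), feedback matrix $\mathbf{W}^1$ (layer $N$ to layer 1), and biases $\mathbf{b}^l$. With $\mathbf{u}^l[0]=\mathbf{0}$, $\mathbf{s}^l[0]=\mathbf{0}$, the dynamics are $$\mathbf{u}^1[t+1]=\mathbf{u}^1[t]+\mathbf{W}^1\mathbf{s}^N[t]+\mathbf{F}^1\mathbf{x}[t]+\mathbf{b}^1-V_{th}\mathbf{s}^1[t+1],$$ $$\mathbf{u}^{l+1}[t+1]=\mathbf{u}^{l+1}[t]+\mathbf{F}^{l+1}\mathbf{s}^l[t+1]+\mathbf{b}^{l+1}-V_{th}\mathbf{s}^{l+1}[t+1],\quad l=1,\dots,N-1,$$ where each spike $\mathbf{s}^l[t+1]$ equals $H(\text{pre-reset potential}-V_{th})$ elementwise ($H$ the Heaviside step). Define $\mathbf{a}^l[t]=\frac1t\sum_{\tau=1}^t\mathbf{s}^l[\tau]$ and $\overline{\mathbf{x}}[t]=\frac1{t+1}\sum_{\tau=0}^t\mathbf{x}[\tau]$, and let ${\mathbf{u}^l}^+[t]$ denote the parts of the membrane potentials for which $$\mathbf{a}^1[t+1]=\sigma\!\left(\tfrac1{V_{th}}\left(\tfrac{t}{t+1}\mathbf{W}^1\mathbf{a}^N[t]+\mathbf{F}^1\overline{\mathbf{x}}[t]+\mathbf{b}^1-\tfrac{{\mathbf{u}^1}^+[t+1]}{t+1}\right)\right),$$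 $$\mathbf{a}^{l+1}[t+1]=\sigma\!\left(\tfrac1{V_{th}}\left(\mathbf{F}^{l+1}\mathbf{a}^l[t+1]+\mathbf{b}^{l+1}-\tfrac{{\mathbf{u}^{l+1}}^+[t+1]}{t+1}\right)\right),\ l=1,\dots,N-1,$$ hold. Suppose $\overline{\mathbf{x}}[t]\to\mathbf{x}^*$, and there exist constants $c$ and $\gamma<1$ such that $|{\mathbf{u}^l_i}^+[t]|\le c$ for all $i,l,t$ and $\|\mathbf{W}^1\|_2\|\mathbf{F}^N\|_2\cdots\|\mathbf{F}^2\|_2\le\gamma V_{th}^N$. Then $\mathbf{a}^l[t]\to{\mathbf{a}^l}^*$ for every $l$, where ${\mathbf{a}^1}^*=f_1\big(f_N\circ\cdots\circ f_2({\mathbf{a}^1}^* ),\mathbf{x}^*\big)$ and ${\mathbf{a}^{l+1}}^*=f_{l+1}({\mathbf{a}^l}^* )$, with $f_1(\mathbf{a},\mathbf{x})=\sigma\big(\frac1{V_{th}}(\mathbf{W}^1\mathbf{a}+\mathbf{F}^1\mathbf{x}+\mathbf{b}^1)\big)$ and $f_l(\mathbf{a})=\sigma\big(\frac1{V_{th}}(\mathbf{F}^l\mathbf{a}+\mathbf{b}^l)\big)$ for $l\ge2$.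
   Context: $\sigma$ is applied elementwise with $\sigma(x)=1$ for $x>1$, $\sigma(x)=x$ for $0\le x\le1$, $\sigma(x)=0$ for $x<0$. $\|\cdot\|_2$ is the spectral norm. In the paper each membrane potential is decomposed as $\mathbf{u}^l_i[t]={\mathbf{u}^l_i}^-[t]+{\mathbf{u}^l_i}^+[t]$, the first term collecting the accumulated negative and excess positive terms (those clipped by $\sigma$), and ${\mathbf{u}^l}^+[t]$ being the remainder, so that the displayed relations hold. *)

From HB Require Import structures.
From mathcomp Require Import all_boot all_order all_algebra.
From mathcomp Require Import all_classical all_reals all_analysis.
Set Implicit Arguments. Unset Strict Implicit. Unset Printing Implicit Defensive.
Import Order.TTheory GRing.Theory Num.Theory.
Local Open Scope ring_scope.
Local Open Scope classical_set_scope.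

Definition sigma {R : realType} (z : R) : R :=
  if 1 < z then 1 else if z < 0 then 0 else z.

Definition heaviside {R : realType} (z : R) : R := if 0 <= z then 1 else 0.

Definition vnorm2 {R : realType} {n : nat} (v : 'cV[R]_n) : R :=
  Num.sqrt (\sum_(i < n) (v i 0) ^+ 2).

Definition spec_norm {R : realType} {m n : nat} (A : 'M[R]_(m, n)) : R :=
  sup [set vnorm2 (A *m v) | v in [set v : 'cV[R]_n | vnorm2 v <= 1]].

Definition avg_rate {R : realType} {n : nat} (s : nat -> 'cV[R]_n) (t : nat)
  : 'cV[R]_n := (t%:R)^-1 *: \sum_(tau < t) s tau.+1.

Definition avg_input {R : realType} {n : nat} (x : nat -> 'cV[R]_n) (t : nat)
  : 'cV[R]_n := (t.+1%:R)^-1 *: \sum_(tau < t.+1) x tau.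

From HB Require Import structures.
From mathcomp Require Import all_boot all_order all_algebra.
From mathcomp Require Import all_classical all_reals all_analysis.
From mathcomp Require Import ring lra zify.
Import Order.TTheory GRing.Theory Num.Theory.

(* Since sigma is 1-Lipschitz, the layer map y |-> sigma((A y + e) / V) is
   (|A|_2 / V)-Lipschitz for the Euclidean norm, so one turn around the feedback
   loop contracts distances by L = |W^1|_2 |F^N|_2 ... |F^2|_2 / V^N <= gamma < 1.
   The rate equations say that the average rates follow this loop up to
   perturbations of order 1/t (from the bounded u^+ and the factor t/(t+1)) and of
   order |xbar[t] - x*|, all vanishing. Hence D(t, s) = |a^1[t] - a^1[s]| satisfies
   D(t+1, s+1) <= L D(t, s) + d_t + d_s with d_t -> 0, which makes a^1 Cauchy; the
   later layers converge by continuity of the layer maps, and passing to the limit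
   in the rate equations gives the fixed-point relations. *)

Set Implicit Arguments.
Unset Strict Implicit.
Unset Printing Implicit Defensive.
Local Open Scope classical_set_scope.
Local Open Scope ring_scope.

Section sigma.
Variable R : realType.
Implicit Types x y : R.

Lemma sigma_ge0 x : 0 <= sigma x.
Proof. by rewrite /sigma; case: ifP => // _; case: ifP => // /negbT; rewrite -leNgt. Qed.

Lemma sigma_le1 x : sigma x <= 1.
Proof. by rewrite /sigma; case: ifP => // /negbT; rewrite -leNgt; case: ifP. Qed.

Lemma sigma_lipschitz x y : `|sigma x - sigma y| <= `|x - y|.
Proof.
rewrite /sigma; case: (lerP 0 (x - y)) => [xy|xy]; rewrite ?(ger0_norm xy) ?(ltr0_norm xy);
  rewrite ler_norml; case: ltP => ?; case: ltP => ?; case: ltP => ?; case: ltP => ?;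
  apply/andP; split; lra.
Qed.

End sigma.

Section euclidean_norm.
Variables (R : realType) (n : nat).
Implicit Types u v w : 'cV[R]_n.

Lemma sumr_sqr_ge0 v : 0 <= \sum_(i < n) v i 0 ^+ 2.
Proof. by apply: sumr_ge0 => i _; apply: sqr_ge0. Qed.

Lemma vnorm2_ge0 v : 0 <= vnorm2 v.
Proof. exact: sqrtr_ge0. Qed.

Lemma sqr_vnorm2 v : vnorm2 v ^+ 2 = \sum_(i < n) v i 0 ^+ 2.
Proof. by rewrite sqr_sqrtr // sumr_sqr_ge0. Qed.

Lemma vnorm20 : vnorm2 (0 : 'cV[R]_n) = 0.
Proof. by rewrite /vnorm2 big1 ?sqrtr0 // => i _; rewrite mxE expr0n. Qed.

Lemma vnorm2Z a v : vnorm2 (a *: v) = `|a| * vnorm2 v.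
Proof.
rewrite /vnorm2 -sqrtr_sqr -sqrtrM ?sqr_ge0 // mulr_sumr.
by congr Num.sqrt; apply: eq_bigr => i _; rewrite mxE exprMn.
Qed.

Lemma vnorm2N v : vnorm2 (- v) = vnorm2 v.
Proof. by rewrite -scaleN1r vnorm2Z normrN1 mul1r. Qed.

Lemma normr_coord_le_vnorm2 v i : `|v i 0| <= vnorm2 v.
Proof.
rewrite -sqrtr_sqr ler_sqrt ?sumr_sqr_ge0 // (bigD1 i) //= lerDl.
by apply: sumr_ge0 => j _; apply: sqr_ge0.
Qed.

Lemma vnorm2_eq0 v : vnorm2 v = 0 -> v = 0.
Proof.
move=> v0; apply/matrixP => i j; rewrite ord1 mxE; apply/normr0_eq0/le_anti.
by rewrite normr_ge0 -v0 normr_coord_le_vnorm2.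
Qed.

Lemma vnorm2_le_sum v : vnorm2 v <= \sum_(i < n) `|v i 0|.
Proof.
have S0 : 0 <= \sum_(i < n) `|v i 0| by apply: sumr_ge0.
rewrite -(ger0_norm S0) -sqrtr_sqr ler_sqrt ?sqr_ge0 // expr2 mulr_suml.
apply: ler_sum => i _; rewrite (bigD1 i) //= mulrDr -real_normK ?num_real // expr2 lerDl.
by apply: mulr_ge0 => //; apply: sumr_ge0.
Qed.

Lemma vnorm2_le_const v c : (forall i, `|v i 0| <= c) -> vnorm2 v <= n%:R * c.
Proof.
move=> vc; apply: le_trans (vnorm2_le_sum v) _.
by rewrite mulr_natl -[X in c *+ X]card_ord -sumr_const ler_sum.
Qed.

Lemma cauchy_schwarz u v : \sum_(i < n) u i 0 * v i 0 <= vnorm2 u * vnorm2 v.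
Proof.
set A := \sum_(i < n) u i 0 ^+ 2; set B := \sum_(i < n) v i 0 ^+ 2.
set C := \sum_(i < n) u i 0 * v i 0.
have [A0 B0] : 0 <= A /\ 0 <= B by split; apply: sumr_sqr_ge0.
suff C2 : C ^+ 2 <= A * B.
  by rewrite (le_trans (ler_norm C)) // -sqrtr_sqr -sqrtrM // ler_sqrt // mulr_ge0.
have [Az|Anz] := eqVneq A 0.
  have u0 i : u i 0 = 0.
    by apply/eqP; rewrite -sqrf_eq0; apply/eqP/(psumr_eq0P _ Az) => // j _; apply: sqr_ge0.
  by rewrite /C big1 ?expr0n ?mulr_ge0 // => i _; rewrite u0 mul0r.
(* the discriminant of the nonnegative quadratic form [sum_i (C u_i - A v_i)^2] *)
have quad : \sum_(i < n) (C * u i 0 - A * v i 0) ^+ 2 = A * (A * B - C ^+ 2).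
  transitivity (\sum_(i < n) (C ^+ 2 * u i 0 ^+ 2 - (2 * C * A) * (u i 0 * v i 0)
                             + A ^+ 2 * v i 0 ^+ 2)).
    by apply: eq_bigr => i _; ring.
  rewrite big_split /= sumrB -!mulr_sumr -/A -/B -/C; ring.
have : 0 <= A * (A * B - C ^+ 2) by rewrite -quad; apply: sumr_ge0 => i _; apply: sqr_ge0.
by rewrite pmulr_rge0 ?subr_ge0 // lt_def Anz.
Qed.

Lemma ler_vnorm2D u v : vnorm2 (u + v) <= vnorm2 u + vnorm2 v.
Proof.
have S0 : 0 <= vnorm2 u + vnorm2 v by rewrite addr_ge0 ?vnorm2_ge0.
rewrite -(ger0_norm S0) -sqrtr_sqr ler_sqrt ?sqr_ge0 // sqrrD !sqr_vnorm2.
have -> : \sum_(i < n) (u + v) i 0 ^+ 2 = \sum_(i < n) u i 0 ^+ 2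
    + (\sum_(i < n) u i 0 * v i 0) *+ 2 + \sum_(i < n) v i 0 ^+ 2.
  rewrite -sumrMnl -!big_split /=; apply: eq_bigr => i _; rewrite mxE; ring.
by rewrite lerD2r lerD2l lerMn2r cauchy_schwarz.
Qed.

Lemma ler_vnorm2B u v : vnorm2 (u - v) <= vnorm2 u + vnorm2 v.
Proof. by rewrite -(vnorm2N v) ler_vnorm2D. Qed.

End euclidean_norm.

Section spectral_norm.
Variables (R : realType) (p q : nat) (A : 'M[R]_(p, q)).

Lemma spec_norm_has_ubound :
  has_ubound [set vnorm2 (A *m v) | v in [set v : 'cV[R]_q | vnorm2 v <= 1]].
Proof.
exists (\sum_(i < p) \sum_(j < q) `|A i j|) => _ [v /= v1 <-].
apply: le_trans (vnorm2_le_sum _) _; apply: ler_sum => i _; rewrite mxE.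
apply: le_trans (ler_norm_sum _ _ _) _; apply: ler_sum => j _.
by rewrite normrM ler_piMr // (le_trans (normr_coord_le_vnorm2 _ _)).
Qed.

Lemma vnorm2_mulmx_le_spec_norm v : vnorm2 v <= 1 -> vnorm2 (A *m v) <= spec_norm A.
Proof. by move=> v1; apply: (ub_le_sup spec_norm_has_ubound); exists v. Qed.

Lemma spec_norm_ge0 : 0 <= spec_norm A.
Proof.
apply: le_trans (vnorm2_mulmx_le_spec_norm (v := 0) _); rewrite ?mulmx0 vnorm20 //.
Qed.

Lemma vnorm2_mulmx_le v : vnorm2 (A *m v) <= spec_norm A * vnorm2 v.
Proof.
have [/vnorm2_eq0 ->|v_neq0] := eqVneq (vnorm2 v) 0.
  by rewrite mulmx0 !vnorm20 mulr0.
have v_gt0 : 0 < vnorm2 v by rewrite lt_def v_neq0 vnorm2_ge0.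
have := @vnorm2_mulmx_le_spec_norm ((vnorm2 v)^-1 *: v).
rewrite -scalemxAr !vnorm2Z ger0_norm ?invr_ge0 ?vnorm2_ge0 // mulVf // lexx.
by move=> /(_ isT); rewrite ler_pdivrMl // mulrC.
Qed.

End spectral_norm.

Definition sigma_layer (R : realType) (p q : nat) (V : R) (A : 'M[R]_(p, q))
    (e : 'cV[R]_p) (y : 'cV[R]_q) : 'cV[R]_p :=
  map_mx sigma (V^-1 *: (A *m y + e)).

Section sigma_layer_lipschitz.
Variables (R : realType) (p q : nat) (V : R).
Hypothesis V_gt0 : 0 < V.

Lemma vnorm2_map_sigma_le (v : 'cV[R]_p) : vnorm2 (map_mx sigma v) <= p%:R.
Proof.
rewrite -[p%:R]mulr1; apply: vnorm2_le_const => i.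
by rewrite mxE ger0_norm ?sigma_ge0 ?sigma_le1.
Qed.

Lemma vnorm2_sigma_layerB (A : 'M[R]_(p, q)) e e' y y' :
  vnorm2 (sigma_layer V A e y - sigma_layer V A e' y')
    <= V^-1 * (spec_norm A * vnorm2 (y - y') + vnorm2 (e - e')).
Proof.
have sigma_contr (a b : 'cV[R]_p) : vnorm2 (map_mx sigma a - map_mx sigma b) <= vnorm2 (a - b).
  rewrite /vnorm2 ler_sqrt ?sumr_sqr_ge0 //; apply: ler_sum => i _; rewrite !mxE.
  rewrite -[X in X <= _]real_normK ?num_real // -[X in _ <= X]real_normK ?num_real //.
  rewrite lerXn2r ?nnegrE //.
  exact: sigma_lipschitz.
apply: le_trans (sigma_contr _ _) _.
rewrite -scalerBr vnorm2Z ger0_norm ?invr_ge0 ?(ltW V_gt0) // ler_pM2l ?invr_gt0 //.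
rewrite opprD addrACA -mulmxBr; apply: le_trans (ler_vnorm2D _ _) _.
by rewrite lerD2r vnorm2_mulmx_le.
Qed.

End sigma_layer_lipschitz.

Section vanishing_sequences.
Variable R : realType.
Implicit Types u v : nat -> R.

Lemma cvg0_le u v : (forall t, 0 <= v t <= u t) -> u @ \oo --> 0 -> v @ \oo --> 0.
Proof.
move=> vu u0; have cst0 : (fun _ : nat => (0 : R)) @ \oo --> 0 by exact: (cvg_cst (0 : R^o)).
by apply: (squeeze_cvgr _ cst0 u0); apply: nearW.
Qed.

Lemma cvg0_harmonicM (C : R) : (fun t => C / t.+1%:R) @ \oo --> 0.
Proof.
by rewrite -(mulr0 C); apply: cvgM; [exact: (cvg_cst (C : R^o)) | exact: cvg_harmonic].
Qed.

Lemma cvg0_sum n (f : 'I_n -> nat -> R) :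
  (forall i, f i @ \oo --> 0) -> (fun t => \sum_(i < n) f i t) @ \oo --> 0.
Proof.
move=> f0; have : (fun t => \sum_(i < n) f i t) @ \oo --> \sum_(i < n) (0 : R^o).
  by apply: cvg_big => [|i _]; [exact: add_continuous | exact: f0].
by rewrite big1.
Qed.

Lemma cvg0_lincomb (a b : R) u v : u @ \oo --> 0 -> v @ \oo --> 0 ->
  (fun t => a * (b * u t + v t)) @ \oo --> 0.
Proof.
move=> u0 v0; rewrite -(mulr0 a) -[X in a * X](addr0 0) -[X in X + 0](mulr0 b).
apply: cvgM; first exact: (cvg_cst (a : R^o)).
by apply: cvgD => //; apply: cvgM => //; exact: (cvg_cst (b : R^o)).
Qed.

End vanishing_sequences.

Lemma normr_coordB_le_vnorm2 (R : realType) n (u v : 'cV[R]_n) i :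
  `|u i 0 - v i 0| <= vnorm2 (u - v).
Proof. by have := normr_coord_le_vnorm2 (u - v) i; rewrite !mxE. Qed.

Section vnorm2_convergence.
Variables (R : realType) (n : nat).
Implicit Types (v w : nat -> 'cV[R]_n) (l : 'cV[R]_n).

Lemma vnorm2_cvg0P v l : (fun t => vnorm2 (v t - l)) @ \oo --> 0 <->
  forall i, (fun t => v t i 0) @ \oo --> (l i 0 : R^o).
Proof.
split=> [vl i | vl].
  apply/subr_cvg0/norm_cvg0P; apply: cvg0_le vl => t.
  by rewrite normr_ge0 normr_coordB_le_vnorm2.
apply: (cvg0_le _ (cvg0_sum (fun i => (norm_cvg0P _).2 ((subr_cvg0 _ _).2 (vl i))))) => t.
rewrite vnorm2_ge0 (le_trans (vnorm2_le_sum _)) //.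
by apply: ler_sum => i _; rewrite !mxE.
Qed.

Lemma vnorm2_cvg0_shiftS v l : (fun t => vnorm2 (v t.+1 - l)) @ \oo --> 0 <->
  (fun t => vnorm2 (v t - l)) @ \oo --> 0.
Proof. by rewrite (@cvg_shiftS R^o (fun t => vnorm2 (v t - l))). Qed.

Lemma vnorm2_cvg0_unique v l l' : (fun t => vnorm2 (v t - l)) @ \oo --> 0 ->
  (fun t => vnorm2 (v t - l')) @ \oo --> 0 -> l = l'.
Proof.
move=> /vnorm2_cvg0P vl /vnorm2_cvg0P vl'; apply/matrixP => i j; rewrite ord1.
exact: norm_cvg_unique (vl i) (vl' i).
Qed.

Lemma vnorm2_cauchy_cvg v :
  (forall e, 0 < e -> exists T, forall t s, (T <= t)%N -> (T <= s)%N ->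
    vnorm2 (v t - v s) <= e) ->
  exists l, (fun t => vnorm2 (v t - l)) @ \oo --> 0.
Proof.
move=> v_cauchy; exists (\col_i lim ((fun t => (v t i 0 : R^o)) @ \oo)).
apply/vnorm2_cvg0P => i; rewrite mxE; apply: cauchy_cvg; apply: cauchy_exP => e e0.
have [T vT] := v_cauchy _ (divr_gt0 e0 (ltr0Sn _ 1)).
exists (v T i 0); rewrite /fmapE -ball_normE /ball_; exists T => // t Tt /=.
apply: le_lt_trans (normr_coordB_le_vnorm2 _ _ _) _; apply: le_lt_trans (vT T t _ Tt) _ => //.
by rewrite ltr_pdivrMr // ltr_pMr // ltr1n.
Qed.

Lemma vnorm2D_cvg0 v w : (fun t => vnorm2 (v t)) @ \oo --> 0 ->
  (fun t => vnorm2 (w t)) @ \oo --> 0 -> (fun t => vnorm2 (v t + w t)) @ \oo --> 0.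
Proof.
move=> v0 w0; apply: (cvg0_le (u := fun t => vnorm2 (v t) + vnorm2 (w t))) => [t|].
  by rewrite vnorm2_ge0 ler_vnorm2D.
by rewrite -(addr0 0); apply: cvgD.
Qed.

Lemma vnorm2_harmonicZ_cvg0 v C : (forall t, vnorm2 (v t) <= C) ->
  (fun t => vnorm2 ((t.+1%:R)^-1 *: v t)) @ \oo --> 0.
Proof.
move=> vC; apply: cvg0_le (cvg0_harmonicM C) => t.
rewrite vnorm2_ge0 vnorm2Z ger0_norm ?invr_ge0 // mulrC.
by rewrite ler_wpM2r ?invr_ge0.
Qed.

End vnorm2_convergence.

Lemma vnorm2_mulmx_cvg0 (R : realType) p q (A : 'M[R]_(p, q)) (v : nat -> 'cV[R]_q) :
  (fun t => vnorm2 (v t)) @ \oo --> 0 -> (fun t => vnorm2 (A *m v t)) @ \oo --> 0.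
Proof.
move=> v0; apply: (cvg0_le (u := fun t => spec_norm A * vnorm2 (v t))) => [t|].
  by rewrite vnorm2_ge0 vnorm2_mulmx_le.
by rewrite -(mulr0 (spec_norm A)); apply: cvgM => //; exact: (cvg_cst (_ : R^o)).
Qed.

Lemma perturbed_contraction_cauchy (R : realType) (D : nat -> nat -> R) (L B : R)
    (del : nat -> R) :
  0 <= L < 1 -> (forall t s, D t s <= B) -> del @ \oo --> 0 ->
  (forall t s, D t.+1 s.+1 <= L * D t s + del t + del s) ->
  forall e, 0 < e -> exists T, forall t s, (T <= t)%N -> (T <= s)%N -> D t s <= e.
Proof.
move=> /andP[L0 L1] DB /cvgr0Pnorm_le del0 Drec e e0.
have e2 : 0 < e / 2 by rewrite divr_gt0.
have eta0 : 0 < e * (1 - L) / 4 by rewrite divr_gt0 // mulr_gt0 // subr_gt0.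
have [M _ delM] := del0 _ eta0.
have del_small n : (M <= n)%N -> del n <= e * (1 - L) / 4.
  by move=> Mn; apply: le_trans (ler_norm _) (delM _ Mn).
(* once the perturbations are below e(1-L)/4, the error e/2 is stable under the recursion *)
have D_shift j t s : (M <= t)%N -> (M <= s)%N -> D (t + j)%N (s + j)%N <= L ^+ j * B + e / 2.
  move=> Mt Ms; elim: j => [|j IHj]; first by rewrite !addn0 expr0 mul1r; have := DB t s; lra.
  rewrite !addnS; apply: le_trans (Drec _ _) _.
  have := del_small (t + j)%N ltac:(lia); have := del_small (s + j)%N ltac:(lia).
  have := ler_wpM2l L0 IHj; rewrite exprS; nra.
have LB0 : (fun j => L ^+ j * B) @ \oo --> 0.
  rewrite -(mul0r B); apply: cvgM; last exact: (cvg_cst (B : R^o)).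
  by apply: cvg_expr; rewrite ger0_norm.
move/cvgr0Pnorm_le : LB0 => /(_ _ e2) [J _ LJ].
exists (M + J)%N => t s Mt Ms; pose j := (minn t s - M)%N.
have Jj : (J <= j)%N by rewrite /j; lia.
have [tj sj] : t = (t - j + j)%N /\ s = (s - j + j)%N by rewrite /j; split; lia.
rewrite tj sj; apply: le_trans (D_shift _ _ _ _ _) _; rewrite /j; try lia.
by have := LJ _ Jj; have := ler_norm (L ^+ j * B); rewrite /j; lra.
Qed.

Lemma sigma_layer_cvg (R : realType) p q (V : R) (A : 'M[R]_(p, q)) (e : 'cV[R]_p)
    (E : nat -> 'cV[R]_p) (y : nat -> 'cV[R]_q) (l : 'cV[R]_q) : 0 < V ->
  (fun t => vnorm2 (y t - l)) @ \oo --> 0 -> (fun t => vnorm2 (E t)) @ \oo --> 0 ->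
  (fun t => vnorm2 (sigma_layer V A (e + E t) (y t) - sigma_layer V A e l)) @ \oo --> 0.
Proof.
move=> V_gt0 yl E0; apply: cvg0_le (cvg0_lincomb V^-1 (spec_norm A) yl E0) => t.
by rewrite vnorm2_ge0 (le_trans (vnorm2_sigma_layerB V_gt0 _ _ _ _ _)) // addrAC subrr add0r.
Qed.

Section perturbed_feedback_chain.
Variables (R : realType) (V : R) (n : nat) (d : nat -> nat).
Variables (W : 'M[R]_(d 0%N, d n.+1)) (F : forall k, 'M[R]_(d k.+1, d k)).
Variables (e : 'cV[R]_(d 0%N)) (b : forall k, 'cV[R]_(d k)).
Variables (a : forall k, nat -> 'cV[R]_(d k)).
Variables (E : nat -> 'cV[R]_(d 0%N)) (eps : forall k, nat -> 'cV[R]_(d k)).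
Hypothesis V_gt0 : 0 < V.
Hypothesis rate_first : forall t, a 0%N t.+1 = sigma_layer V W (e + E t) (a n.+1 t).
Hypothesis rate_next : forall k t, (k < n.+1)%N ->
  a k.+1 t.+1 = sigma_layer V (F k) (b k.+1 + eps k.+1 t) (a k t.+1).
Hypothesis E_cvg0 : (fun t => vnorm2 (E t)) @ \oo --> 0.
Hypothesis eps_cvg0 : forall k, (k < n.+1)%N -> (fun t => vnorm2 (eps k.+1 t)) @ \oo --> 0.

Definition forward_gain k := \prod_(j < k) (V^-1 * spec_norm (F j)).

Definition loop_gain := V^-1 * spec_norm W * forward_gain n.+1.

Lemma loop_gainE : loop_gain = spec_norm W * \prod_(k < n.+1) spec_norm (F k) / V ^+ n.+2.
Proof.
rewrite /loop_gain /forward_gain big_split /= prodr_const card_ord exprVn [V ^+ n.+2]exprS.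
by field; rewrite expf_neq0 ?gt_eqF.
Qed.

Hypothesis loop_gain_lt1 : loop_gain < 1.

Fixpoint forward_rates (l : 'cV[R]_(d 0%N)) k : 'cV[R]_(d k) :=
  match k return 'cV[R]_(d k) with
  | 0%N => l
  | k'.+1 => sigma_layer V (F k') (b k'.+1) (forward_rates l k')
  end.

Let Vinv_ge0 : 0 <= V^-1. Proof. by rewrite invr_ge0 ltW. Qed.

Lemma forward_gain_ge0 k : 0 <= forward_gain k.
Proof. by apply: prodr_ge0 => j _; rewrite mulr_ge0 ?invr_ge0 ?spec_norm_ge0 ?ltW. Qed.

Lemma rate_dist_forward_le k : (k < n.+2)%N ->
  exists2 del : nat -> R, del @ \oo --> 0 & forall t s,
    vnorm2 (a k t.+1 - a k s.+1)
      <= forward_gain k * vnorm2 (a 0%N t.+1 - a 0%N s.+1) + del t + del s.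
Proof.
elim: k => [_|k IHk kn].
  exists (fun=> 0); first exact: (cvg_cst (0 : R^o)).
  by move=> t s; rewrite /forward_gain big_ord0 mul1r !addr0.
have [del del0 a_del] := IHk (ltnW kn).
exists (fun t => V^-1 * (spec_norm (F k) * del t + vnorm2 (eps k.+1 t))).
  exact/cvg0_lincomb/eps_cvg0.
move=> t s; rewrite !rate_next //.
apply: le_trans (vnorm2_sigma_layerB V_gt0 _ _ _ _ _) _.
have eps_ts : vnorm2 (b k.+1 + eps k.+1 t - (b k.+1 + eps k.+1 s))
    <= vnorm2 (eps k.+1 t) + vnorm2 (eps k.+1 s).
  by rewrite opprD addrACA subrr add0r ler_vnorm2B.
apply: le_trans (ler_wpM2l Vinv_ge0 (lerD (ler_wpM2l (spec_norm_ge0 _) (a_del t s)) eps_ts)) _.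
rewrite /forward_gain big_ord_recr /= -/(forward_gain k); lra.
Qed.

Lemma first_rate_dist_contraction :
  exists2 del : nat -> R, del @ \oo --> 0 & forall t s,
    vnorm2 (a 0%N t.+2 - a 0%N s.+2)
      <= loop_gain * vnorm2 (a 0%N t.+1 - a 0%N s.+1) + del t + del s.
Proof.
have [del del0 a_del] := rate_dist_forward_le (ltnSn n.+1).
exists (fun t => V^-1 * (spec_norm W * del t + vnorm2 (E t.+1))).
  by apply: cvg0_lincomb del0 _; rewrite (@cvg_shiftS R^o (fun t => vnorm2 (E t))).
move=> t s; rewrite [a 0%N t.+2]rate_first [a 0%N s.+2]rate_first.
apply: le_trans (vnorm2_sigma_layerB V_gt0 _ _ _ _ _) _.
have E_ts : vnorm2 (e + E t.+1 - (e + E s.+1)) <= vnorm2 (E t.+1) + vnorm2 (E s.+1).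
  by rewrite opprD addrACA subrr add0r ler_vnorm2B.
apply: le_trans (ler_wpM2l Vinv_ge0 (lerD (ler_wpM2l (spec_norm_ge0 _) (a_del t s)) E_ts)) _.
rewrite /loop_gain; lra.
Qed.

Lemma first_rate_cvg : exists l, (fun t => vnorm2 (a 0%N t - l)) @ \oo --> 0.
Proof.
have [del del0 a_rec] := first_rate_dist_contraction.
have L01 : 0 <= loop_gain < 1.
  by rewrite loop_gain_lt1 /loop_gain !mulr_ge0 ?spec_norm_ge0 ?forward_gain_ge0.
have a0_bnd t : vnorm2 (a 0%N t.+1) <= (d 0%N)%:R by rewrite rate_first vnorm2_map_sigma_le.
have D_bnd t s : vnorm2 (a 0%N t.+1 - a 0%N s.+1) <= 2 * (d 0%N)%:R.
  by apply: le_trans (ler_vnorm2B _ _) _; have := a0_bnd t; have := a0_bnd s; lra.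
have [l al] := vnorm2_cauchy_cvg (perturbed_contraction_cauchy
  (D := fun t s => vnorm2 (a 0%N t.+1 - a 0%N s.+1)) L01 D_bnd del0 a_rec).
by exists l; apply/vnorm2_cvg0_shiftS.
Qed.

Lemma forward_rates_cvg l : (fun t => vnorm2 (a 0%N t - l)) @ \oo --> 0 ->
  forall k, (k < n.+2)%N -> (fun t => vnorm2 (a k t - forward_rates l k)) @ \oo --> 0.
Proof.
move=> a0l; elim=> [//|k IHk kn]; apply/vnorm2_cvg0_shiftS => /=.
under eq_fun do rewrite rate_next //.
apply: sigma_layer_cvg => //; last exact: eps_cvg0.
by apply/(vnorm2_cvg0_shiftS (a k))/IHk/ltnW.
Qed.

Lemma forward_rates_feedback l : (fun t => vnorm2 (a 0%N t - l)) @ \oo --> 0 ->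
  l = sigma_layer V W e (forward_rates l n.+1).
Proof.
move=> a0l; apply: (@vnorm2_cvg0_unique _ _ (fun t => a 0%N t.+1)).
  exact/(vnorm2_cvg0_shiftS (a 0%N)).
under eq_fun do rewrite rate_first.
exact: sigma_layer_cvg (forward_rates_cvg a0l (ltnSn _)) E_cvg0.
Qed.

Theorem perturbed_feedback_chain_cvg : exists l,
  l = sigma_layer V W e (forward_rates l n.+1) /\
  forall k, (k < n.+2)%N -> (fun t => vnorm2 (a k t - forward_rates l k)) @ \oo --> 0.
Proof.
have [l a0l] := first_rate_cvg.
by exists l; split; [apply: forward_rates_feedback | apply: forward_rates_cvg].
Qed.

End perturbed_feedback_chain.

Lemma feedback_rate_argE (R : realType) p q m (t : nat) (W : 'M[R]_(p, q))
    (F1 : 'M[R]_(p, m)) (a : 'cV[R]_q) (xbar xstar : 'cV[R]_m) (b up : 'cV[R]_p) :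
  (t%:R / t.+1%:R) *: (W *m a) + F1 *m xbar + b - (t.+1%:R)^-1 *: up
    = W *m a + (F1 *m xstar + b
                + (F1 *m (xbar - xstar) + (t.+1%:R)^-1 *: (- (W *m a) - up))).
Proof.
have -> : t%:R / t.+1%:R = 1 - (t.+1%:R)^-1 :> R.
  by rewrite -natr1; field; rewrite natr1 pnatr_eq0.
by rewrite scalerBl scale1r mulmxBr; apply/matrixP => i j; rewrite !mxE; ring.
Qed.

Lemma feedback_perturbation_cvg0 (R : realType) p q m (W : 'M[R]_(p, q))
    (F1 : 'M[R]_(p, m)) (xbar : nat -> 'cV[R]_m) (xstar : 'cV[R]_m)
    (a : nat -> 'cV[R]_q) (up : nat -> 'cV[R]_p) (Ca Cu : R) :
  (forall i, (fun t => xbar t i 0) @ \oo --> (xstar i 0 : R^o)) ->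
  (forall t, vnorm2 (a t) <= Ca) -> (forall t, vnorm2 (up t) <= Cu) ->
  (fun t => vnorm2 (F1 *m (xbar t - xstar) + (t.+1%:R)^-1 *: (- (W *m a t) - up t)))
    @ \oo --> 0.
Proof.
move=> xbar_cvg a_bnd up_bnd; apply: vnorm2D_cvg0.
  by apply/vnorm2_mulmx_cvg0/vnorm2_cvg0P.
apply: (vnorm2_harmonicZ_cvg0 (C := spec_norm W * Ca + Cu)) => t.
apply: le_trans (ler_vnorm2B _ _) _; rewrite vnorm2N lerD ?up_bnd //.
by apply: le_trans (vnorm2_mulmx_le _ _) _; rewrite ler_wpM2l ?spec_norm_ge0.
Qed.

Theorem theorem3 (R : realType) (N : nat) (d : nat -> nat) (m : nat)
  (Vth : R) (F1 : 'M[R]_(d 0, m)) (W1 : 'M[R]_(d 0, d N.-1))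
  (F : forall k : nat, 'M[R]_(d k.+1, d k)) (b : forall k : nat, 'cV[R]_(d k))
  (x : nat -> 'cV[R]_m)
  (u s up : forall k : nat, nat -> 'cV[R]_(d k))
  (xstar : 'cV[R]_m) (c gamma : R) :
  (2 <= N)%N -> 0 < Vth ->
  (* initial conditions *)
  (forall k, u k 0%N = 0) -> (forall k, s k 0%N = 0) ->
  (* dynamics of layer 1 *)
  (forall t : nat,
     let pre := u 0%N t + W1 *m s N.-1 t + F1 *m x t + b 0%N in
     s 0%N t.+1 = map_mx heaviside (pre - const_mx Vth) /\
     u 0%N t.+1 = pre - Vth *: s 0%N t.+1) ->
  (* dynamics of layers 2..N *)
  (forall (k t : nat), (k.+1 < N)%N ->
     let pre := u k.+1 t + F k *m s k t.+1 + b k.+1 in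
     s k.+1 t.+1 = map_mx heaviside (pre - const_mx Vth) /\
     u k.+1 t.+1 = pre - Vth *: s k.+1 t.+1) ->
  (* the relations defining u^+ *)
  (forall t : nat,
     avg_rate (s 0%N) t.+1 =
       map_mx sigma (Vth^-1 *: ((t%:R / t.+1%:R) *: (W1 *m avg_rate (s N.-1) t)
                               + F1 *m avg_input x t + b 0%N
                               - (t.+1%:R)^-1 *: up 0%N t.+1))) ->
  (forall (k t : nat), (k.+1 < N)%N ->
     avg_rate (s k.+1) t.+1 =
       map_mx sigma (Vth^-1 *: (F k *m avg_rate (s k) t.+1 + b k.+1
                               - (t.+1%:R)^-1 *: up k.+1 t.+1))) ->
  (* convergence of the average input *)
  (forall i, (fun t : nat => avg_input x t i 0) @ \oo --> (xstar i 0 : R^o)) ->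
  (* boundedness of u^+ *)
  (forall (k t : nat) (i : 'I_(d k)), (k < N)%N -> `|up k t i 0| <= c) ->
  gamma < 1 ->
  spec_norm W1 * \prod_(k < N.-1) spec_norm (F k) <= gamma * Vth ^+ N ->
  exists astar : forall k : nat, 'cV[R]_(d k),
    astar 0%N = map_mx sigma (Vth^-1 *: (W1 *m astar N.-1 + F1 *m xstar + b 0%N)) /\
    (forall k, (k.+1 < N)%N ->
       astar k.+1 = map_mx sigma (Vth^-1 *: (F k *m astar k + b k.+1))) /\
    (forall k, (k < N)%N -> forall i : 'I_(d k),
       (fun t : nat => avg_rate (s k) t i 0) @ \oo --> (astar k i 0 : R^o)).
Proof.
(* the spiking dynamics enter only through the rate relations defining u^+ *)
move=> N2 Vth_gt0 _ _ _ _ rate1 rateS xbar_cvg up_bnd gamma_lt1 norm_prod.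
case: N N2 W1 rate1 rateS up_bnd norm_prod => [|[|n]] //= _ W1 rate1 rateS up_bnd norm_prod.
pose a k := avg_rate (s k).
pose E t := F1 *m (avg_input x t - xstar) + (t.+1%:R)^-1 *: (- (W1 *m a n.+1 t) - up 0%N t.+1).
pose eps k t := (t.+1%:R)^-1 *: - up k t.+1.
have rate_first t : a 0%N t.+1 = sigma_layer Vth W1 (F1 *m xstar + b 0%N + E t) (a n.+1 t).
  by rewrite /a rate1 (feedback_rate_argE _ _ _ _ _ xstar).
have rate_next k t : (k < n.+1)%N ->
    a k.+1 t.+1 = sigma_layer Vth (F k) (b k.+1 + eps k.+1 t) (a k t.+1).
  by move=> kn; rewrite /a rateS // /sigma_layer /eps scalerN addrA.
have up_vnorm2 k t : (k < n.+2)%N -> vnorm2 (up k t) <= (d k)%:R * c.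
  by move=> kn; apply: vnorm2_le_const => i; apply: up_bnd.
have a_bnd k t : (k < n.+2)%N -> vnorm2 (a k t) <= (d k)%:R.
  case: t => [|t] kn; first by rewrite /a /avg_rate big_ord0 scaler0 vnorm20.
  by case: k kn => [|k] kn; rewrite ?rate_first ?rate_next // vnorm2_map_sigma_le.
have E_cvg0 : (fun t => vnorm2 (E t)) @ \oo --> 0.
  by apply: feedback_perturbation_cvg0 => // t; [apply: a_bnd | apply: up_vnorm2].
have eps_cvg0 k : (k < n.+1)%N -> (fun t => vnorm2 (eps k.+1 t)) @ \oo --> 0.
  move=> kn; apply: (vnorm2_harmonicZ_cvg0 (C := (d k.+1)%:R * c)) => t.
  by rewrite vnorm2N up_vnorm2.
have loop_lt1 : loop_gain Vth W1 F < 1.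
  rewrite loop_gainE // ltr_pdivrMr ?exprn_gt0 //.
  by rewrite (le_lt_trans norm_prod) // ltr_pM2r ?exprn_gt0.
have [l [l_fix a_cvg]] :=
  perturbed_feedback_chain_cvg Vth_gt0 rate_first rate_next E_cvg0 eps_cvg0 loop_lt1.
exists (forward_rates Vth F b l); split; [|split] => //.
  by rewrite {1}l_fix /sigma_layer addrA.
by move=> k kn i; apply: (vnorm2_cvg0P _ _).1 (a_cvg k kn) i.
Qed.
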